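(* Let $D$ be a connected link diagram with at least one crossing. There are precisely two sign assignments $s_1$ and $s_2$ for $D$, and $s_1=-s_2$.
   Context: Let $D$ be an oriented link diagram in $S^2$. Its shadow gives a CW decomposition $X$ of $S^2$: $0$-cells are the crossings, $1$-cells are the arcs of $D$ between consecutive crossings (oriented by the link orientation, so each $1$-cell $e$ runs from $e(0)$ to $e(1)$), $2$-cells are the complementary regions. For $i\in\{0,1\}$ let $h(e,i)=1$ if $e$ is the upper strand at the crossing $e(i)$ and $h(e,i)=-1$ if it is the lower strand. Define $\beta(e)=-1$ if $h(e,0)=h(e,1)$ and $\beta(e)=1$ otherwise. A sign assignment is a function $s:X^0\to\{\pm1\}$ (from crossings to $\{\pm 1\}$) such that $s(e(0))s(e(1))=\beta(e)$ for every $1$-cell $e$. *)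

(* Combinatorial model of an oriented link diagram in S^2 as a
   4-valent map on the sphere with crossing information. *)
From mathcomp Require Import all_boot all_order all_algebra all_fingroup.
Set Implicit Arguments. Unset Strict Implicit. Unset Printing Implicit Defensive.
Import GRing.Theory.
Local Open Scope ring_scope.

(* V = crossings (0-cells), E = 1-cells (oriented arcs).
   A dart (half-edge) is a pair (e, i) : E * bool, standing for the end e(i)
   of e (i = false is e(0), the start; i = true is e(1), the end).
   [ends e i] = e(i) : V.
   [rot] = cyclic order (rotation) of the four darts around each crossing,
   given by the embedding in S^2.
   [h e i] = true iff e is the upper strand at e(i) (h(e,i) = 1). *)

Definition dvert (V E : finType) (ends : E -> bool -> V) (d : E * bool) : V :=
  ends d.1 d.2.

Definition dopp (E : finType) (d : E * bool) : E * bool := (d.1, ~~ d.2).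

Definition dh (E : finType) (h : E -> bool -> bool) (d : E * bool) : bool :=
  h d.1 d.2.

Definition face_step (E : finType) (rot : {perm E * bool}) (d : E * bool) :=
  rot (dopp d).

Definition is_oriented_diagram (V E : finType) (ends : E -> bool -> V)
    (rot : {perm E * bool}) (h : E -> bool -> bool) : Prop :=
  (forall d, dvert ends (rot d) = dvert ends d) /\
  (forall v : V, #|[set d | dvert ends d == v]| = 4%N) /\
  (forall d d', dvert ends d = dvert ends d' -> fconnect rot d d') /\
  (* the two strands through a crossing are the pairs of opposite darts
     {d, rot^2 d}; each strand enters and leaves (orientation) ... *)
  (forall d, (rot (rot d)).2 = ~~ d.2) /\
  (* ... is entirely upper or entirely lower ... *)
  (forall d, dh h (rot (rot d)) = dh h d) /\
  (* ... and one strand is upper, the other lower *)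
  (forall d, dh h (rot d) = ~~ dh h d) /\
  (* the map is drawn on the sphere S^2: Euler characteristic V - E + F = 2 *)
  (#|V| + fcard (face_step rot) predT = #|E| + 2)%N.

Definition diagram_connected (E : finType) (rot : {perm E * bool}) : Prop :=
  forall d d' : E * bool,
    connect (fun a b => (b == rot a) || (b == dopp a)) d d'.

Definition beta (E : finType) (h : E -> bool -> bool) (e : E) : int :=
  if h e false == h e true then -1 else 1.

Definition sign_assignment (V E : finType) (ends : E -> bool -> V)
    (h : E -> bool -> bool) (s : {ffun V -> int}) : Prop :=
  (forall v, s v = 1 \/ s v = -1) /\
  (forall e, s (ends e false) * s (ends e true) = beta h e).

(* Write a sign as (-1)^x with x in F_2.  A sign assignment is then a 0-cochain
   x with coboundary b, where b(e) = 1 iff e is on the same strand at both ends.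
   b is a cocycle: walking around a face, consecutive edges meet at a crossing
   on different strands, so the sum of b over the face telescopes.  For a
   connected diagram only constants lie in the kernels of the coboundary d0 and
   of the transpose of d1, so rank d0 >= V - 1 and rank d1 >= F - 1; Euler's
   formula V - E + F = 2 then gives dim ker d1 <= V - 1 <= rank d0, i.e.
   H^1 = 0 and b = d0 x.  Two solutions differ by an element of ker d0, a
   constant, whence exactly the two assignments s and -s. *)

From mathcomp Require Import all_boot all_order all_algebra all_fingroup.
From mathcomp Require Import zify ring.
Set Implicit Arguments. Unset Strict Implicit. Unset Printing Implicit Defensive.
Import GRing.Theory.
Local Open Scope ring_scope.

Definition sign_F2 (x : 'F_2) : int := if x == 0 then 1 else -1.

Lemma F2_cases (x : 'F_2) : x = 0 \/ x = 1.
Proof. by case: x => [[|[|]]] //= ?; [left|right]; apply/val_inj. Qed.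

Lemma F2_addrr (x : 'F_2) : x + x = 0.
Proof. exact/addrr_pchar2/pchar_Fp. Qed.

Lemma F2_addr_eq0 (x y : 'F_2) : x + y = 0 -> x = y.
Proof. by move/eqP; rewrite addr_eq0 oppr_pchar2 ?pchar_Fp // => /eqP. Qed.

Lemma F2_negb (b : bool) : ((~~ b)%:R : 'F_2) = 1 + b%:R.
Proof. by case: b; apply/val_inj. Qed.

Lemma F2_eqb (a b : bool) : ((a == b)%:R : 'F_2) = 1 + a%:R + b%:R.
Proof. by case: a; case: b; apply/val_inj. Qed.

Lemma sign_F2_pm1 (x : 'F_2) : sign_F2 x = 1 \/ sign_F2 x = -1.
Proof. by rewrite /sign_F2; case: eqP; [left|right]. Qed.

Lemma sign_F2D (x y : 'F_2) : sign_F2 (x + y) = sign_F2 x * sign_F2 y.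
Proof. by case: (F2_cases x) => ->; case: (F2_cases y) => ->. Qed.

Lemma sign_F2_nat (b : bool) : sign_F2 b%:R = if b then -1 else 1.
Proof. by case: b. Qed.

Lemma pm1_sqr (a : int) : (a = 1 \/ a = -1) -> a * a = 1.
Proof. by case=> ->. Qed.

Lemma pm1_mul_cancel (a b c d : int) :
    (a = 1 \/ a = -1) -> (b = 1 \/ b = -1) -> (c = 1 \/ c = -1) ->
    (d = 1 \/ d = -1) ->
  a * b = c * d -> a * c = b * d.
Proof. by move=> [->|->] [->|->] [->|->] [->|->]. Qed.

Lemma sign_assignment_opp (V E : finType) (ends : E -> bool -> V)
    (h : E -> bool -> bool) (s : {ffun V -> int}) :
  sign_assignment ends h s -> sign_assignment ends h [ffun v => - s v].
Proof.
case=> s_pm s_e; split=> [v|e]; rewrite !ffunE ?mulrNN //.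
by case: (s_pm v) => ->; [right|left].
Qed.

Lemma connect_fun_eq (T : finType) (X : eqType) (e : rel T) (f : T -> X) x y :
  (forall a b, e a b -> f a = f b) -> connect e x y -> f x = f y.
Proof.
move=> fe exy; apply/eqP; rewrite eq_sym -[_ == _]/(y \in [pred z | f z == f x]).
by rewrite -(closed_connect _ exy) ?inE // => a b /fe; rewrite !inE => ->.
Qed.

Lemma sum_mul_delta (R : nzSemiRingType) n (x : 'I_n -> R) i0 :
  \sum_i x i * (i == i0)%:R = x i0.
Proof.
rewrite (bigD1 i0) //= eqxx mulr1 big1 ?addr0 // => i /negbTE ->.
by rewrite mulr0.
Qed.

Lemma sum_fst_delta (R : nzSemiRingType) (T : finType) (q : T * bool -> R) x :
  \sum_(d : T * bool) (d.1 == x)%:R * q d = q (x, false) + q (x, true).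
Proof.
rewrite (eq_bigr (fun d => (d.1 == x)%:R * q (d.1, d.2))); last by case.
rewrite -(pair_bigA _ (fun t b => (t == x)%:R * q (t, b))) /= (bigD1 x) //=.
rewrite [X in _ + X]big1 => [|t /negbTE tx]; last first.
  by rewrite big1 // => b _; rewrite tx mul0r.
by rewrite addr0 big_bool /= eqxx !mul1r addrC.
Qed.

Lemma eq_enum_val (T : finType) (t : T) (j : 'I_#|T|) :
  (t == enum_val j) = (j == enum_rank t).
Proof. by apply/eqP/eqP => [->|->]; rewrite ?enum_valK ?enum_rankK. Qed.

Lemma const_kermx_rank (F : fieldType) m n (A : 'M[F]_(m, n)) :
    (forall u : 'rV_m, u *m A = 0 -> forall i j, u 0 i = u 0 j) ->
  (m <= (\rank A).+1)%N.
Proof.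
case: m A => [//|m] A kerA; have: (kermx A <= (const_mx 1 : 'rV[F]_m.+1))%MS.
  apply/row_subP => i; set u := row i _.
  have /kerA u_const : u *m A = 0 by rewrite -row_mul mulmx_ker row0.
  have -> : u = u 0 0 *: const_mx 1.
    by apply/rowP => j; rewrite [RHS]mxE [const_mx _ _ _]mxE mulr1 (u_const j 0).
  exact: scalemx_sub.
move/mxrankS; rewrite mxrank_ker => le_ker.
have := leq_trans le_ker (rank_leq_row (const_mx 1 : 'rV[F]_m.+1)).
by rewrite leq_subLR addn1.
Qed.

Lemma kermx_sub_of_rank (F : fieldType) m n p (A : 'M[F]_(m, n)) (C : 'M_(n, p)) :
  A *m C = 0 -> (n <= \rank A + \rank C)%N -> (kermx C <= A)%MS.
Proof.
move=> AC0 rk; have AK : (A <= kermx C)%MS by exact/sub_kermxP.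
rewrite -(mxrank_leqif_sup AK).2; apply/eqP.
have := mxrankS AK; rewrite mxrank_ker; lia.
Qed.

Section FaceStep.

Variables (E : finType) (rot : {perm E * bool}).

Lemma face_step_inj : injective (face_step rot).
Proof. by move=> [a1 a2] [b1 b2] /perm_inj [-> /negb_inj ->]. Qed.

Lemma froot_face_step d :
  froot (face_step rot) (face_step rot d) = froot (face_step rot) d.
Proof.
apply/esym/eqP; rewrite root_connect ?fconnect1 //.
exact: fconnect_sym face_step_inj.
Qed.

Lemma sum_face_step (R : nzSemiRingType) r (g : E * bool -> R) :
  \sum_(d | froot (face_step rot) d == r) g (face_step rot d) =
  \sum_(d | froot (face_step rot) d == r) g d.
Proof.
rewrite [RHS](reindex_inj face_step_inj); apply: eq_bigl => d.
by rewrite froot_face_step.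
Qed.

Lemma sum_face_coboundary r (g : E * bool -> 'F_2) :
  \sum_(d | froot (face_step rot) d == r) (g d + g (face_step rot d)) = 0.
Proof. by rewrite big_split /= sum_face_step F2_addrr. Qed.

End FaceStep.

Section Diagram.

Variables (V E : finType) (ends : E -> bool -> V) (rot : {perm E * bool}).
Variable h : E -> bool -> bool.
Hypothesis rot_dvert : forall d, dvert ends (rot d) = dvert ends d.
Hypothesis rot_dh : forall d, dh h (rot d) = ~~ dh h d.
Hypothesis dvert_surj : forall v, exists d, dvert ends d = v.
Hypothesis connected : diagram_connected rot.

Local Notation froot := (froot (face_step rot)).

Definition faces := [set d | froot d == d].

(* Cochains are row vectors indexed through [enum_rank]; right multiplication by
   [incidence_ve] is d0 and by the transpose of [incidence_fe] is d1. *)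
Definition incidence_ve : 'M['F_2]_(#|V|, #|E|) := \matrix_(i, j)
  ((ends (enum_val j) false == enum_val i)%:R +
   (ends (enum_val j) true == enum_val i)%:R).

Definition incidence_fe : 'M['F_2]_(#|faces|, #|E|) := \matrix_(i, j)
  \sum_(d | froot d == enum_val i) (d.1 == enum_val j)%:R.

(* The additive form of [beta]: [beta h e = sign_F2 (beta_F2 0 (enum_rank e))]. *)
Definition beta_F2 : 'rV['F_2]_#|E| :=
  \row_j (h (enum_val j) false == h (enum_val j) true)%:R.

Local Notation D := incidence_ve.
Local Notation B := incidence_fe.

Lemma incidence_ve_mul (u : 'rV_#|V|) e :
  (u *m D) 0 (enum_rank e) =
  u 0 (enum_rank (ends e false)) + u 0 (enum_rank (ends e true)).
Proof.
rewrite mxE; under eq_bigr => i _ do rewrite !mxE mulrDr enum_rankK.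
rewrite big_split /= -!(sum_mul_delta (fun i => u 0 i)).
by congr (_ + _); apply: eq_bigr => i _; rewrite eq_enum_val.
Qed.

Lemma mul_tr_incidence_fe (x : 'rV_#|E|) i :
  (x *m B^T) 0 i = \sum_(d | froot d == enum_val i) x 0 (enum_rank d.1).
Proof.
rewrite mxE; under eq_bigr => j _ do rewrite !mxE big_distrr /=.
rewrite exchange_big /=; apply: eq_bigr => d _.
rewrite -(sum_mul_delta (fun j => x 0 j) (enum_rank d.1)).
by apply: eq_bigr => j _; rewrite eq_enum_val.
Qed.

Lemma incidence_fe_mul (u : 'rV_#|faces|) e :
  let q d := \sum_i u 0 i * (froot d == enum_val i)%:R in
  (u *m B) 0 (enum_rank e) = q (e, false) + q (e, true).
Proof.
move=> q; rewrite -sum_fst_delta mxE.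
under eq_bigr => i _ do rewrite mxE enum_rankK big_mkcond big_distrr /=.
rewrite exchange_big /=; apply: eq_bigr => d _.
rewrite /q big_distrr; apply: eq_bigr => i _.
by case: (froot d == enum_val i); rewrite /= ?mulr1 ?mulr0 // mulrC.
Qed.

Lemma incidence_ve_fe : D *m B^T = 0.
Proof.
apply/matrixP => v i.
have -> : (D *m B^T) v i = (row v D *m B^T) 0 i by rewrite -row_mul [RHS]mxE.
rewrite mul_tr_incidence_fe [RHS]mxE.
rewrite -[RHS](sum_face_coboundary rot (enum_val i)
                 (fun d => (dvert ends d == enum_val v)%:R)).
apply: eq_bigr => [[e b]] _; rewrite !mxE enum_rankK /face_step rot_dvert.
by case: b; rewrite /dvert /dopp //= addrC.
Qed.

(* Around a face, [beta_F2 e = 1 + h(e,0) + h(e,1)] telescopes, because passing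
   a crossing to the next edge of the face switches strands. *)
Lemma beta_F2_cocycle : beta_F2 *m B^T = 0.
Proof.
apply/rowP => i; rewrite mul_tr_incidence_fe [RHS]mxE.
rewrite -[RHS](sum_face_coboundary rot (enum_val i) (fun d => (dh h d)%:R)).
apply: eq_bigr => [[e b]] _; rewrite !mxE enum_rankK /face_step rot_dh.
rewrite F2_negb F2_eqb /dh /dopp /=.
by case: b => /=; ring.
Qed.

Lemma rank_incidence_ve : (#|V| <= (\rank D).+1)%N.
Proof.
apply: const_kermx_rank => u uD0.
have u_edge e : u 0 (enum_rank (ends e false)) = u 0 (enum_rank (ends e true)).
  by apply: F2_addr_eq0; rewrite -incidence_ve_mul uD0 mxE.
pose f d := u 0 (enum_rank (dvert ends d)).
have f_const d d' : f d = f d'.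
  apply: connect_fun_eq (connected d d') => a b /orP[] /eqP ->.
    by rewrite /f rot_dvert.
  by case: a => e [] //; rewrite /f /dvert /=.
move=> i j; have [d dv] := dvert_surj (enum_val i).
have [d' dv'] := dvert_surj (enum_val j).
by rewrite -[i]enum_valK -[j]enum_valK -dv -dv'; exact: f_const.
Qed.

Lemma rank_incidence_fe : (#|faces| <= (\rank B).+1)%N.
Proof.
apply: const_kermx_rank => u uB0.
pose q d := \sum_i u 0 i * (froot d == enum_val i)%:R.
have q_edge e : q (e, false) = q (e, true).
  by apply: F2_addr_eq0; rewrite -incidence_fe_mul uB0 mxE.
have q_face d : q (face_step rot d) = q d by rewrite /q froot_face_step.
have q_const d d' : q d = q d'.
  apply: connect_fun_eq (connected d d') => a b /orP[] /eqP ->.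
    have -> : rot a = face_step rot (dopp a).
      by case: a => e b'; rewrite /face_step /dopp /= negbK.
    by rewrite q_face; case: a => e [] /=; rewrite q_edge.
  by case: a => e [] /=; rewrite q_edge.
have uq i : u 0 i = q (enum_val i).
  rewrite /q; have /eqP -> : froot (enum_val i) == enum_val i.
    by have := enum_valP i; rewrite inE.
  rewrite -(sum_mul_delta (fun i => u 0 i) i); apply: eq_bigr => i' _.
  by rewrite (inj_eq enum_val_inj) eq_sym.
by move=> i j; rewrite !uq.
Qed.

(* Vanishing of H^1(S^2; F_2): the rank bounds from connectivity together with
   the Euler characteristic force every cocycle to be a coboundary. *)
Lemma beta_F2_coboundary :
  (#|E| + 2 <= #|V| + #|faces|)%N -> exists x, beta_F2 = x *m D.
Proof.
move=> euler; apply/submxP; apply: submx_trans (introT sub_kermxP beta_F2_cocycle) _.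
apply: kermx_sub_of_rank incidence_ve_fe _; rewrite mxrank_tr.
have := rank_incidence_ve; have := rank_incidence_fe; lia.
Qed.

Lemma sign_assignment_exists :
  (#|E| + 2 <= #|V| + #|faces|)%N -> exists s, sign_assignment ends h s.
Proof.
case/beta_F2_coboundary => x betaE.
exists [ffun v => sign_F2 (x 0 (enum_rank v))].
split=> [v|e]; rewrite !ffunE; first exact: sign_F2_pm1.
rewrite -sign_F2D -incidence_ve_mul -betaE mxE enum_rankK sign_F2_nat.
by rewrite /beta; case: eqP.
Qed.

Lemma sign_assignment_unique (s t : {ffun V -> int}) :
    sign_assignment ends h s -> sign_assignment ends h t ->
  t = s \/ t = [ffun v => - s v].
Proof.
move=> [s_pm s_e] [t_pm t_e]; pose r v := t v * s v.
have r_const d d' : r (dvert ends d) = r (dvert ends d').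
  apply: (connect_fun_eq (f := r \o dvert ends)) (connected d d').
  move=> a ? /orP[] /eqP ->.
    by rewrite /= rot_dvert.
  case: a => e b; rewrite /r /dvert /=.
  have := pm1_mul_cancel (t_pm _) (t_pm _) (s_pm _) (s_pm _)
            (etrans (t_e e) (esym (s_e e))).
  by case: b => /= ->.
have [v0 _ | V0] := pickP (@predT V); last first.
  by left; apply/ffunP => v; have := V0 v.
have tE v : t v = r v0 * s v.
  have [d <-] := dvert_surj v; have [d0 <-] := dvert_surj v0.
  by rewrite (r_const d0 d) /r -mulrA (pm1_sqr (s_pm _)) mulr1.
case: (t_pm v0) (s_pm v0) => [t0|t0] [s0|s0];
  [left|right|right|left]; apply/ffunP => v;
  by rewrite ?ffunE tE /r t0 s0 ?mul1r ?mulN1r.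
Qed.

End Diagram.

Theorem proposition2p1 (V E : finType) (ends : E -> bool -> V)
    (rot : {perm E * bool}) (h : E -> bool -> bool) :
  is_oriented_diagram ends rot h ->
  diagram_connected rot ->
  (0 < #|V|)%N ->
  exists s1 s2 : {ffun V -> int},
    [/\ sign_assignment ends h s1, sign_assignment ends h s2, s1 != s2,
        (forall s, sign_assignment ends h s -> s = s1 \/ s = s2) &
        s1 = [ffun v => - s2 v]].
Proof.
move=> [rot_dvert [card_dvert [_ [_ [_ [rot_dh euler]]]]]] conn /card_gt0P[v0 _].
have dvert_surj v : exists d, dvert ends d = v.
  have /card_gt0P[d] : (0 < #|[set d | dvert ends d == v]|)%N by rewrite card_dvert.
  by rewrite inE => /eqP; exists d.
have card_faces : #|faces rot| = fcard (face_step rot) predT.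
  by apply: eq_card => d; rewrite !inE andbT.
have [|s sa_s] := sign_assignment_exists rot_dvert rot_dh dvert_surj conn.
  by rewrite card_faces euler.
exists s, [ffun v => - s v]; split.
- exact: sa_s.
- exact: sign_assignment_opp.
- apply/eqP => /ffunP/(_ v0); rewrite ffunE.
  by case: sa_s => /(_ v0)[] ->.
- by move=> t; apply: sign_assignment_unique rot_dvert dvert_surj conn s t sa_s.
- by apply/ffunP => v; rewrite !ffunE opprK.
Qed.
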